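(* Assume $J$ satisfies (J1), (J2), (J5) and (JP), and $h\equiv0$. Let $u$ be a minimizer for $H$ in $Q_\ell(q)$ for some $q\in\mathbb Z^d$, $\ell\in\mathbb N$. If $q\in\partial u$, then $$I_{Q_\ell(q),Q_\ell(q)}(u)\ge c_\star\,\ell^{d-s},$$ for a constant $c_\star>0$ depending only on $d$, $s$, $\lambda$ and $\Lambda$.
   Context: Fix $d\ge2$, $|x|:=\sum_n|x_n|$, $|x|_\infty:=\max_n|x_n|$. Configurations are maps $u:\mathbb Z^d\to\{-1,1\}$; $\partial u:=\{i: u_i=1\text{ and }\exists j,\ |i-j|=1,\ u_j=-1\}$. $I_{\Gamma,\Omega}(u):=\sum_{i\in\Gamma,j\in\Omega}J_{ij}(1-u_iu_j)$. With $h\equiv0$, for finite $\Gamma$: $H_\Gamma(u):=\sum_{(i,j)\in\mathbb Z^{2d}\setminus(\mathbb Z^d\setminus\Gamma)^2}J_{ij}(1-u_iu_j)$; $u$ is a minimizer for $H$ in $\Gamma$ if $H_\Gamma(u)\le H_\Gamma(v)$ for all $v$ agreeing with $u$ outside $\Gamma$. $Q_\ell(q):=\{i\in\mathbb Z^d:|i-q|_\infty\le\ell\}$. Conditions on $J:\mathbb Z^d\times\mathbb Z^d\to[0,\infty)$: (J1) $J_{ij}=J_{ji}$; (J2) $J_{ii}=0$; (J5) $J_{ij}=J_{i'j'}$ whenever $i-i'=j-j'\in\tau\mathbb Z^d$, for some $\tau\in\mathbb N$; (JP) $\lambda|i-j|^{-d-s}\le J_{ij}\le\Lambda|i-j|^{-d-s}$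 for all $i\ne j$, for some $s\in(0,1)$, $\Lambda\ge\lambda>0$. *)

From mathcomp Require Import all_boot.
From Stdlib Require Import Reals ZArith List.

Set Implicit Arguments.
Unset Strict Implicit.

Definition pt (d : nat) := 'I_d -> Z.

(* A configuration u : Z^d -> {-1,1}; true encodes +1, false encodes -1. *)
Definition config (d : nat) := pt d -> bool.
Definition sv (b : bool) : R := if b then 1%R else (-1)%R.

Definition psub {d} (x y : pt d) : pt d := fun k => (x k - y k)%Z.

Definition l1 {d} (x : pt d) : Z :=
  foldr (fun k acc => (Z.abs (x k) + acc)%Z) 0%Z (enum 'I_d).
Definition linf {d} (x : pt d) : Z :=
  foldr (fun k acc => Z.max (Z.abs (x k)) acc) 0%Z (enum 'I_d).

Definition in_boundary {d} (u : config d) (q : pt d) : Prop :=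
  u q = true /\ exists j : pt d, l1 (psub q j) = 1%Z /\ u j = false.

Definition cube {d} (q : pt d) (l : nat) (i : pt d) : Prop :=
  (linf (psub i q) <= Z.of_nat l)%Z.

Definition cube_enum {d} (q : pt d) (l : nat) : list (pt d) :=
  map (fun f : {ffun 'I_d -> 'I_(l.*2.+1)} =>
         fun k => (q k + Z.of_nat (nat_of_ord (f k)) - Z.of_nat l)%Z)
      (enum {ffun 'I_d -> 'I_(l.*2.+1)}).

Definition pair_energy {d} (J : pt d -> pt d -> R) (u : config d)
  (p : pt d * pt d) : R :=
  (J (fst p) (snd p) * (1 - sv (u (fst p)) * sv (u (snd p))))%R.

Definition list_sumR (l : list R) : R := fold_right Rplus 0%R l.

(* I_{A,B}(u) for finite sets A, B given by duplicate-free enumerations. *)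
Definition Isum {d} (J : pt d -> pt d -> R) (u : config d)
  (A B : list (pt d)) : R :=
  list_sumR (map (fun i => list_sumR
     (map (fun j => pair_energy J u (i, j)) B)) A).

Definition adm {d} (Gamma : pt d -> Prop) (p : pt d * pt d) : Prop :=
  Gamma (fst p) \/ Gamma (snd p).

Definition partial_H {d} J (u : config d) (L : list (pt d * pt d)) : R :=
  list_sumR (map (pair_energy J u) L).

(* H_Gamma(u) <= H_Gamma(v), where H_Gamma is the (possibly infinite) sum of
   the nonnegative terms J_ij (1 - u_i u_j) over admissible pairs, i.e. the
   supremum of finite partial sums, compared in [0, +oo]. *)
Definition H_le {d} (J : pt d -> pt d -> R) (Gamma : pt d -> Prop)
  (u v : config d) : Prop :=
  forall L : list (pt d * pt d), NoDup L -> (forall p, In p L -> adm Gamma p) ->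
  forall eps : R, (0 < eps)%R ->
  exists L' : list (pt d * pt d), NoDup L' /\ (forall p, In p L' -> adm Gamma p) /\
    (partial_H J u L <= partial_H J v L' + eps)%R.

Definition minimizer {d} (J : pt d -> pt d -> R) (Gamma : pt d -> Prop)
  (u : config d) : Prop :=
  forall v : config d, (forall i, ~ Gamma i -> v i = u i) -> H_le J Gamma u v.

Definition J1 {d} (J : pt d -> pt d -> R) : Prop := forall i j, J i j = J j i.
Definition J2 {d} (J : pt d -> pt d -> R) : Prop := forall i, J i i = 0%R.
Definition J5 {d} (J : pt d -> pt d -> R) : Prop :=
  exists tau : nat, (1 <= tau)%coq_nat /\
    forall i j i' j' : pt d,
      (forall k, (i k - i' k = j k - j' k)%Z) ->
      (forall k, exists m : Z, (i k - i' k = Z.of_nat tau * m)%Z) ->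
      J i j = J i' j'.
Definition JP {d} (J : pt d -> pt d -> R) (s lam Lam : R) : Prop :=
  forall i j : pt d, (0 < l1 (psub i j))%Z ->
    (lam * Rpower (IZR (l1 (psub i j))) (- (INR d + s)) <= J i j /\
     J i j <= Lam * Rpower (IZR (l1 (psub i j))) (- (INR d + s)))%R.

From mathcomp Require Import all_boot.
From Stdlib Require Import Reals ZArith List Lia Lra Psatz.
From Stdlib Require Import Classical ClassicalEpsilon FunctionalExtensionality.
From mathcomp Require Import zify.

(** Flipping a set [F] of +1 spins of a minimizer to -1 does not lower the energy,
   so the interaction of [F] with the -1 spins outside [F] is at most twice its
   interaction with the +1 spins outside [F]. For [F] the +1 spins of [Q_r(p)], the
   latter is bounded through the tail of the kernel [|x|^(-d-s)] by the powers
   [w^(-s)] of the depths [w = r + 1 - |i - p|_oo], while the sum of both is at least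
   [c |F|^(1 - s/d)] by a nonlocal isoperimetric inequality. Summing over
   [R <= r <= 2R] gives [V(2R) >= k R^s V(R)^(1 - s/d)] for the volume [V(r) = |F|],
   and induction on [R] yields [V(R) >= c R^d]. This applies to the +1 spins around
   [q] and to the -1 spins around a neighbour of [q]; since opposite spins of
   [Q_l(q)] are at l1-distance at most [2 d l], their interaction is at least
   [(c l^d)^2 lam (2 d l)^(-d-s)]. *)

Set Implicit Arguments.
Set Strict Implicit.

Definition asbool (P : Prop) : bool := if excluded_middle_informative P then true else false.

Lemma asbool_true (P : Prop) : asbool P = true <-> P.
Proof. by rewrite /asbool; case: excluded_middle_informative. Qed.

Lemma asbool_false (P : Prop) : asbool P = false <-> ~ P.
Proof. by rewrite /asbool; case: excluded_middle_informative. Qed.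

Lemma asboolT (P : Prop) : P -> asbool P = true. Proof. by move/asbool_true. Qed.
Lemma asboolF (P : Prop) : ~ P -> asbool P = false. Proof. by move/asbool_false. Qed.

Lemma In_filter_asbool (T : Type) (P : T -> Prop) (L : list T) x :
  In x (filter (fun y => asbool (P y)) L) -> P x.
Proof. by case/filter_In => _ /asbool_true. Qed.

Lemma In_mem (T : eqType) (x : T) (s : seq.seq T) : In x s <-> x \in s.
Proof.
elim: s => [|a s IH] //=; rewrite inE; split.
  by case=> [->|/IH ->]; rewrite ?eqxx ?orbT.
by case/orP=> [/eqP ->|/IH]; auto.
Qed.

Lemma uniq_NoDup (T : eqType) (s : seq.seq T) : uniq s -> NoDup s.
Proof.
elim: s => [|a s IH] /=; first by constructor.
by case/andP=> Ha Hs; constructor; [move/In_mem; apply/negP | exact: IH].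
Qed.

Section Norms.
Variable d : nat.
Implicit Types (x y a b c i j q : pt d) (l r : nat).

Lemma pt_ext x y : (forall k, x k = y k) -> x = y.
Proof. exact: functional_extensionality. Qed.

Lemma pt_neq_coord x y : x <> y -> exists k, x k <> y k.
Proof.
move=> Hxy; apply: NNPP => H; apply: Hxy; apply: pt_ext => k.
by apply: NNPP => ?; apply: H; exists k.
Qed.

Lemma linf_ge x k : (Z.abs (x k) <= linf x)%Z.
Proof.
rewrite /linf; have : k \in enum 'I_d by rewrite mem_enum.
elim: (enum 'I_d) => [|a s IH] //=; rewrite inE => /orP[/eqP <-|/IH]; lia.
Qed.

Lemma linf_le x m : (0 <= m)%Z -> (forall k, Z.abs (x k) <= m)%Z -> (linf x <= m)%Z.
Proof. move=> H0 H; rewrite /linf; elim: (enum 'I_d) => [|a s IH] //=; have := H a; lia. Qed.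

Lemma linf_ge0 x : (0 <= linf x)%Z.
Proof. rewrite /linf; elim: (enum 'I_d) => [|a s IH] /=; lia. Qed.

Lemma l1_ge0 x : (0 <= l1 x)%Z.
Proof. rewrite /l1; elim: (enum 'I_d) => [|a s IH] /=; lia. Qed.

Lemma l1_ge x k : (Z.abs (x k) <= l1 x)%Z.
Proof.
rewrite /l1; have : k \in enum 'I_d by rewrite mem_enum.
elim: (enum 'I_d) => [|a s IH] //=; rewrite inE => /orP[/eqP <-|/IH]; last lia.
have : (0 <= foldr (fun k acc => Z.abs (x k) + acc) 0 s)%Z.
  by clear IH; elim: s => [|b t IHt] /=; lia.
lia.
Qed.

Lemma l1_le_linf x : (l1 x <= Z.of_nat d * linf x)%Z.
Proof.
have sum_le (t : seq.seq 'I_d) :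
    (foldr (fun k acc => Z.abs (x k) + acc) 0 t <= Z.of_nat (size t) * linf x)%Z.
  elim: t => [|a t IH]; first by rewrite /=; lia.
  rewrite [size _]/= Nat2Z.inj_succ; cbn [foldr]; have := linf_ge x a; lia.
by have := sum_le (enum 'I_d); rewrite size_enum_ord.
Qed.

Lemma linf_le_l1 x : (linf x <= l1 x)%Z.
Proof. apply: linf_le; [exact: l1_ge0 | exact: l1_ge]. Qed.

Lemma linf_abs_ext x y : (forall k, Z.abs (x k) = Z.abs (y k)) -> linf x = linf y.
Proof. by move=> H; rewrite /linf; elim: (enum 'I_d) => [|a s IH] //=; rewrite H IH. Qed.

Lemma l1_abs_ext x y : (forall k, Z.abs (x k) = Z.abs (y k)) -> l1 x = l1 y.
Proof. by move=> H; rewrite /l1; elim: (enum 'I_d) => [|a s IH] //=; rewrite H IH. Qed.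

Lemma linf_sym a b : linf (psub a b) = linf (psub b a).
Proof. by apply: linf_abs_ext => k; rewrite /psub; lia. Qed.

Lemma l1_sym a b : l1 (psub a b) = l1 (psub b a).
Proof. by apply: l1_abs_ext => k; rewrite /psub; lia. Qed.

Lemma linf_self a : linf (psub a a) = 0%Z.
Proof. apply: Z.le_antisymm; [apply: linf_le => // k | exact: linf_ge0]; rewrite /psub; lia. Qed.

Lemma linf_triangle a b c : (linf (psub a c) <= linf (psub a b) + linf (psub b c))%Z.
Proof.
apply: linf_le => [|k]; first by have := linf_ge0 (psub a b); have := linf_ge0 (psub b c); lia.
by have := linf_ge (psub a b) k; have := linf_ge (psub b c) k; rewrite /psub; lia.
Qed.

Lemma l1_neq_ge1 a b : a <> b -> (1 <= l1 (psub a b))%Z.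
Proof. by case/pt_neq_coord=> k Hk; have := l1_ge (psub a b) k; rewrite /psub; lia. Qed.

Lemma linf_neq_ge1 a b : a <> b -> (1 <= linf (psub a b))%Z.
Proof. by case/pt_neq_coord=> k Hk; have := linf_ge (psub a b) k; rewrite /psub; lia. Qed.

Lemma In_cube_enum q i l : In i (cube_enum q l) <-> cube q l i.
Proof.
rewrite /cube_enum /cube in_map_iff; split.
  case=> f [<- _]; apply: linf_le => [|k]; first lia.
  by rewrite /psub; have := ltn_ord (f k); move: (nat_of_ord (f k)) => n /ltP; rewrite -muln2; lia.
move=> H; exists [ffun k => inord (Z.to_nat (i k - q k + Z.of_nat l))].
split; last by apply/In_mem; rewrite mem_enum.
apply: pt_ext => k; have := linf_ge (psub i q) k; rewrite /psub ffunE /cube /psub in H * => Hk.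
by rewrite inordK; [rewrite Z2Nat.id; lia | apply/ltP; rewrite -muln2 -multE; lia].
Qed.

Lemma NoDup_cube_enum q l : NoDup (cube_enum q l).
Proof.
apply: NoDup_map_NoDup_ForallPairs; last exact/uniq_NoDup/enum_uniq.
move=> f g _ _ H; apply/ffunP => k; apply: ord_inj.
by have /= := f_equal (fun h => h k) H; lia.
Qed.

Lemma length_cube_enum q l : length (cube_enum q l) = expn l.*2.+1 d.
Proof.
by rewrite /cube_enum length_map -[length _]/(size _) -cardE card_ffun !card_ord.
Qed.

Lemma length_in_cube_le c r L : NoDup L -> (forall j, In j L -> cube c r j) ->
  (length L <= expn r.*2.+1 d)%coq_nat.
Proof.
move=> HL HLc; rewrite -(length_cube_enum c r).
by apply: NoDup_incl_length => // j /HLc /In_cube_enum.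
Qed.

End Norms.

Open Scope R_scope.

Section ListSums.
Variable A : Type.
Implicit Types (L : list A) (f g : A -> R).

Lemma sumR_ext f g L : (forall x, In x L -> f x = g x) ->
  list_sumR (map f L) = list_sumR (map g L).
Proof. by elim: L => [|a L IH] H //=; rewrite H ?IH //; [move=> x Hx; apply: H; right | left]. Qed.

Lemma sumR_le f g L : (forall x, In x L -> f x <= g x) ->
  list_sumR (map f L) <= list_sumR (map g L).
Proof.
elim: L => [|a L IH] H /=; first lra.
by have := H a (or_introl erefl); have : list_sumR (map f L) <= list_sumR (map g L);
  [apply: IH => x Hx; apply: H; right | lra].
Qed.

Lemma sumR_const L c : list_sumR (map (fun=> c) L) = INR (length L) * c.
Proof.
elim: L => [|a L IH]; first by rewrite /=; lra.
by rewrite [length _]/= S_INR Rmult_plus_distr_r -IH /=; lra.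
Qed.

Lemma sumR_const_le f L c : (forall x, In x L -> f x <= c) ->
  list_sumR (map f L) <= INR (length L) * c.
Proof. by move/sumR_le; rewrite sumR_const. Qed.

Lemma sumR_const_ge f L c : (forall x, In x L -> c <= f x) ->
  INR (length L) * c <= list_sumR (map f L).
Proof. by rewrite -sumR_const; apply: sumR_le. Qed.

Lemma sumR_ge0 f L : (forall x, In x L -> 0 <= f x) -> 0 <= list_sumR (map f L).
Proof. by move/sumR_const_ge; rewrite Rmult_0_r. Qed.

Lemma sumR_app f L1 L2 :
  list_sumR (map f (L1 ++ L2)) = list_sumR (map f L1) + list_sumR (map f L2).
Proof. by elim: L1 => [|a L IH] /=; [lra | rewrite IH; lra]. Qed.

Lemma sumR_scal f L a : list_sumR (map (fun x => a * f x) L) = a * list_sumR (map f L).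
Proof. by elim: L => [|b L IH] /=; [lra | rewrite IH; lra]. Qed.

Lemma sumR_plus f g L :
  list_sumR (map (fun x => f x + g x) L) = list_sumR (map f L) + list_sumR (map g L).
Proof. by elim: L => [|b L IH] /=; [lra | rewrite IH; lra]. Qed.

Lemma sumR_if f (b : A -> bool) L :
  list_sumR (map (fun x => if b x then f x else 0) L) = list_sumR (map f (filter b L)).
Proof. by elim: L => [|a L IH] /=; [lra | case: (b a) => /=; rewrite IH; lra]. Qed.

Lemma sumR_filter f (b : A -> bool) L :
  list_sumR (map f L) =
  list_sumR (map f (filter b L)) + list_sumR (map f (filter (fun x => ~~ b x) L)).
Proof. by elim: L => [|a L IH] /=; [lra | case: (b a) => /=; rewrite IH; lra]. Qed.

Lemma sumR_filter_le f (b : A -> bool) L : (forall x, In x L -> 0 <= f x) ->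
  list_sumR (map f (filter b L)) <= list_sumR (map f L).
Proof.
move=> H; rewrite (sumR_filter f b L).
suff : 0 <= list_sumR (map f (filter (fun x => ~~ b x) L)) by lra.
by apply: sumR_ge0 => x /filter_In [Hx _]; apply: H.
Qed.

End ListSums.

Lemma sumR_swap (A B : Type) (g : A -> B -> R) (K : list A) (L : list B) :
  list_sumR (map (fun k => list_sumR (map (g k) L)) K) =
  list_sumR (map (fun i => list_sumR (map (fun k => g k i) K)) L).
Proof.
elim: K => [|k K IH] /=; last by rewrite IH -sumR_plus.
by rewrite sumR_const; lra.
Qed.

Lemma sumR_iota_addn (f : nat -> R) m n :
  list_sumR (map f (iota m n)) = list_sumR (map (fun k => f (addn m k)) (iota 0 n)).
Proof.
elim: n m f => [|n IH] m f //=; rewrite addn0 IH [in RHS]IH.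
by congr (_ + _); apply: sumR_ext => k _; rewrite addnA addn1.
Qed.

Lemma sumR_iotaSr (f : nat -> R) m n :
  list_sumR (map f (iota m n.+1)) = list_sumR (map f (iota m n)) + f (addn m n).
Proof.
elim: n m => [|n IH] m; first by rewrite /= addn0; lra.
have -> : iota m n.+2 = m :: iota m.+1 n.+1 by [].
have -> : iota m n.+1 = m :: iota m.+1 n by [].
have cons_sum x L : list_sumR (map f (x :: L)) = f x + list_sumR (map f L) by [].
by rewrite (cons_sum m (iota m.+1 n.+1)) (cons_sum m (iota m.+1 n)) IH addSnnS; lra.
Qed.

Lemma Rpower_gt0 x y : 0 < Rpower x y.
Proof. exact: exp_pos. Qed.

Lemma Rpower_1_base y : Rpower 1 y = 1.
Proof. by rewrite /Rpower ln_1 Rmult_0_r exp_0. Qed.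

Lemma Rpower_le_base_neg a b y : 0 < a <= b -> y <= 0 -> Rpower b y <= Rpower a y.
Proof.
move=> Hab Hy; rewrite -[y]Ropp_involutive !(Rpower_Ropp _ (- y)).
by apply: Rinv_le_contravar (Rpower_gt0 _ _) _; apply: Rle_Rpower_l; lra.
Qed.

Lemma INR_expn a n : INR (expn a n) = INR a ^ n.
Proof. by elim: n => [|n IH]; rewrite ?expn0 // expnS -multE mult_INR IH. Qed.

Lemma Rpower2_opp_lt1 s : 0 < s -> Rpower 2 (- s) < 1.
Proof. by move=> Hs; rewrite -(Rpower_O 2); [apply: Rpower_lt; lra | lra]. Qed.

Definition kernel (d : nat) (s : R) (x : Z) := Rpower (IZR x) (- (INR d + s)).

Definition tail_const (d : nat) (s : R) := 5 ^ d / (1 - Rpower 2 (- s)).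

Lemma tail_const_gt0 d s : 0 < s -> 0 < tail_const d s.
Proof.
move=> Hs; have := Rpower2_opp_lt1 Hs.
by rewrite /tail_const => H; apply: Rdiv_lt_0_compat; [apply: pow_lt | ]; lra.
Qed.

Section KernelTail.
Variables (d : nat) (s : R).
Hypothesis s_gt0 : 0 < s.

Lemma kernel_le_Rpower (x : Z) t : 0 < t -> t <= IZR x -> kernel d s x <= Rpower t (- (INR d + s)).
Proof. by move=> Ht Htx; apply: Rpower_le_base_neg; have := pos_INR d; lra. Qed.

(* The shell t <= |j - c|_oo < 2t has at most (5t)^d points, each contributing at most t^(-d-s). *)
Lemma kernel_shell_sum_le (c : pt d) (t : nat) (L : list (pt d)) : (1 <= t)%coq_nat -> NoDup L ->
  (forall j, In j L -> Z.of_nat t <= linf (psub j c) < Z.of_nat (2 * t))%Z ->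
  list_sumR (map (fun j => kernel d s (l1 (psub j c))) L) <= 5 ^ d * Rpower (INR t) (- s).
Proof.
move=> Ht HL HLj; have Htr : 1 <= INR t by apply: (le_INR 1).
apply: (Rle_trans _ _ _ (@sumR_const_le _ _ _ (Rpower (INR t) (- (INR d + s))) _)).
  move=> j /HLj Hj; apply: kernel_le_Rpower; first lra.
  by have := linf_le_l1 (psub j c); rewrite INR_IZR_INZ => ?; apply: IZR_le; lia.
have Hlen : (length L <= expn (muln 2 t).*2.+1 d)%coq_nat.
  by apply: (@length_in_cube_le d c (muln 2 t) L HL) => j /HLj; rewrite /cube; lia.
have HP := Rpower_gt0 (INR t) (- (INR d + s)).
apply: (Rle_trans _ _ _ (Rmult_le_compat_r _ _ _ (Rlt_le _ _ HP) (le_INR _ _ Hlen))).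
rewrite INR_expn; apply: (Rle_trans _ _ _ (Rmult_le_compat_r _ _ _ (Rlt_le _ _ HP) _)).
  apply: (pow_incr _ (5 * INR t)); split; first exact: pos_INR.
  by rewrite -muln2 -multE !S_INR !mult_INR /=; lra.
rewrite Rpow_mult_distr Rmult_assoc -(Rpower_pow d (INR t)) -?Rpower_plus; last lra.
by right; congr (_ * Rpower _ _); ring.
Qed.

Lemma kernel_tail_sum_le (c : pt d) (t : nat) (L : list (pt d)) : (1 <= t)%coq_nat -> NoDup L ->
  (forall j, In j L -> Z.of_nat t <= linf (psub j c))%Z ->
  list_sumR (map (fun j => kernel d s (l1 (psub j c))) L) <= tail_const d s * Rpower (INR t) (- s).
Proof.
move=> Ht HL HLj.
have [M HM] : exists M, forall j, In j L -> (Z.to_nat (linf (psub j c)) < expn 2 M * t)%coq_nat.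
  suff [M HM] : exists M, forall j, In j L -> (Z.to_nat (linf (psub j c)) < expn 2 M)%coq_nat.
    by exists M => j /HM; have /leP := leq_pmulr (expn 2 M) (introT leP Ht); lia.
  elim: L {HL HLj} => [|a L [M HM]]; first by exists 0%nat.
  exists (Z.to_nat (linf (psub a c)) + M)%coq_nat.
  have /leP H1 := leq_pexp2l (ltn0Sn 1) (leq_addr M (Z.to_nat (linf (psub a c)))).
  have /leP H2 := leq_pexp2l (ltn0Sn 1) (leq_addl (Z.to_nat (linf (psub a c))) M).
  have /ltP H3 := ltn_expl (Z.to_nat (linf (psub a c))) (ltnSn 1).
  by move=> j [<-|/HM]; rewrite -?plusE; lia.
have := tail_const_gt0 d s_gt0; have := Rpower2_opp_lt1 s_gt0.
elim: M t L Ht HL HLj HM => [|M IH] t L Ht HL HLj HM Hq Hc.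
  case: L HL HLj HM => [|a L] _ HLj HM /=; first by have := Rpower_gt0 (INR t) (- s); nra.
  by have := HLj a (or_introl erefl); have := HM a (or_introl erefl); rewrite expn0; lia.
pose near j := asbool (linf (psub j c) < Z.of_nat (2 * t))%Z.
rewrite (sumR_filter _ near).
have Hnear := @kernel_shell_sum_le c t (filter near L) Ht (NoDup_filter _ HL).
have Hfar := IH (2 * t)%coq_nat (filter (fun j => ~~ near j) L).
have E : Rpower (INR (2 * t)) (- s) = Rpower 2 (- s) * Rpower (INR t) (- s).
  have -> : INR (2 * t) = 2 * INR t by rewrite mult_INR /=; ring.
  by rewrite Rpower_mult_distr //; [lra | apply: lt_0_INR; lia].
rewrite E in Hfar.
have Hsplit : tail_const d s * (1 - Rpower 2 (- s)) = 5 ^ d by rewrite /tail_const; field; lra.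
suff [H1 H2] : list_sumR (map (fun j => kernel d s (l1 (psub j c))) (filter near L))
    <= 5 ^ d * Rpower (INR t) (- s) /\
  list_sumR (map (fun j => kernel d s (l1 (psub j c))) (filter (fun j => ~~ near j) L))
    <= tail_const d s * (Rpower 2 (- s) * Rpower (INR t) (- s)) by nra.
split; [apply: Hnear | apply: Hfar => //]; try lia; try exact: NoDup_filter.
- by move=> j /filter_In [/HLj ? /asbool_true ?].
- by move=> j /filter_In [/HLj ? /negbTE /asbool_false ?]; lia.
- by move=> j /filter_In [/HM + _]; rewrite expnS; move: (expn 2 M) => X; lia.
Qed.

End KernelTail.

Lemma exists_root_bracket (d n : nat) : (1 <= d)%coq_nat -> (1 <= n)%coq_nat ->
  exists R, (1 <= R)%coq_nat /\ (expn R d <= n)%coq_nat /\ (n < expn R.+1 d)%coq_nat.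
Proof.
move=> Hd; have exp_lt R : (expn R.+1 d < expn R.+2 d)%coq_nat.
  by apply/ltP; rewrite ltn_exp2r //; apply/leP; lia.
elim: n => [|n IH] Hn; first lia.
case: (Nat.eq_dec n 0) => [->|Hn0].
  by exists 1%nat; have := exp_lt 0%nat; rewrite exp1n; lia.
have [R [H1 [H2 H3]]] := IH ltac:(lia).
case: (Nat.eq_dec n.+1 (expn R.+1 d)) => H4; last by exists R; lia.
by exists R.+1; have := exp_lt R; lia.
Qed.

Definition outside {d} (F : list (pt d)) (j : pt d) : bool := ~~ asbool (In j F).

Definition iso_const (d : nat) (s : R) :=
  Rpower (INR d) (- (INR d + s)) / 2 * Rpower 2 (- (s / INR d)).

Lemma iso_const_gt0 d s : 0 < iso_const d s.
Proof.
rewrite /iso_const.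
by have := Rpower_gt0 (INR d) (- (INR d + s)); have := Rpower_gt0 2 (- (s / INR d)); nra.
Qed.

Section Isoperimetric.
Variables (d : nat) (s : R).
Hypothesis d_ge1 : (1 <= d)%coq_nat.
Hypothesis s_gt0 : 0 < s.

(* If [F] fills at most half of the cube of radius [R] around [i], the other half lies
   at l1-distance at most [d R] from [i]. *)
Lemma kernel_row_outside_ge (F : list (pt d)) (i : pt d) (R : nat) :
  NoDup F -> In i F -> (1 <= R)%coq_nat -> (2 * length F < expn R.+1 d)%coq_nat ->
  Rpower (INR d) (- (INR d + s)) / 2 * Rpower (INR R) (- s) <=
  list_sumR (map (fun j => kernel d s (l1 (psub i j))) (filter (outside F) (cube_enum i R))).
Proof.
move=> HF Hi HR HN; have HdR : 0 < INR d by apply: lt_0_INR.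
have HRr : 1 <= INR R by apply: (le_INR 1).
set Out := filter (outside F) (cube_enum i R).
have Hlen : INR (expn R d) / 2 <= INR (length Out).
  have H1 := filter_length (fun j => asbool (In j F)) (cube_enum i R).
  have H2 : (length (filter (fun j => asbool (In j F)) (cube_enum i R)) <= length F)%coq_nat.
    apply: NoDup_incl_length; first exact/NoDup_filter/NoDup_cube_enum.
    by move=> j /filter_In [_ /asbool_true].
  have /leP H3 : leq (expn R.+1 d) (expn R.*2.+1 d) by rewrite leq_exp2r //; apply/leP; lia.
  have /leP H4 : leq (expn R d) (expn R.+1 d) by rewrite leq_exp2r //; apply/leP; lia.
  rewrite length_cube_enum in H1.
  have /le_INR : (expn R d <= 2 * length Out)%coq_nat by rewrite /Out /outside; lia.
  by rewrite mult_INR /=; lra.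
have Hterm j : In j Out ->
    Rpower (INR d * INR R) (- (INR d + s)) <= kernel d s (l1 (psub i j)).
  move=> /filter_In [/In_cube_enum Hj /negbTE /asbool_false Hnj].
  have Hij : i <> j by move=> E; apply: Hnj; rewrite -E.
  apply: Rpower_le_base_neg; last by have := pos_INR d; lra.
  have := l1_neq_ge1 Hij; have := l1_le_linf (psub i j); move: Hj; rewrite /cube linf_sym.
  move=> H1 H2 H3; split; first by apply: (IZR_lt 0); lia.
  by rewrite !INR_IZR_INZ -mult_IZR; apply: IZR_le; nia.
apply: (Rle_trans _ _ _ _ (sumR_const_ge _ _ Hterm)).
rewrite -Rpower_mult_distr; try lra.
have HP : 0 < Rpower (INR d) (- (INR d + s)) * Rpower (INR R) (- (INR d + s)).
  by apply: Rmult_lt_0_compat; apply: Rpower_gt0.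
apply: (Rle_trans _ _ _ _ (Rmult_le_compat_r _ _ _ (Rlt_le _ _ HP) Hlen)).
rewrite INR_expn -Rpower_pow; last lra.
have -> : Rpower (INR R) (- s) = Rpower (INR R) (INR d) * Rpower (INR R) (- (INR d + s)).
  by rewrite -Rpower_plus; congr Rpower; ring.
lra.
Qed.

Lemma Rpower_opp_root_bracket (N R : nat) : (1 <= R)%coq_nat -> (expn R d <= 2 * N)%coq_nat ->
  Rpower 2 (- (s / INR d)) * Rpower (INR N) (- (s / INR d)) <= Rpower (INR R) (- s).
Proof.
move=> HR HRN; have HdR : 0 < INR d by apply: lt_0_INR.
have HRr : 1 <= INR R by apply: (le_INR 1).
have /leP HR1 : leq 1 (expn R d) by rewrite expn_gt0 (introT ltP HR).
have HNr : 1 <= INR N by apply: (le_INR 1); lia.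
rewrite Rpower_mult_distr; try lra.
have -> : Rpower (INR R) (- s) = Rpower (Rpower (INR R) (INR d)) (- (s / INR d)).
  by rewrite Rpower_mult; congr Rpower; field; lra.
have : 0 < s / INR d by apply: Rdiv_lt_0_compat.
move=> Hsd; apply: Rpower_le_base_neg; last lra.
split; first exact: Rpower_gt0.
rewrite Rpower_pow; last lra.
by rewrite -INR_expn; have := le_INR _ _ HRN; rewrite mult_INR /=; lra.
Qed.

Lemma kernel_perimeter_ge (F : list (pt d)) : (1 <= length F)%coq_nat -> NoDup F -> exists R : nat,
  iso_const d s * Rpower (INR (length F)) (1 - s / INR d) <=
  list_sumR (map (fun i => list_sumR (map (fun j => kernel d s (l1 (psub i j)))
      (filter (outside F) (cube_enum i R)))) F).
Proof.
move=> HN HF; set N := length F.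
have [R [HR1 [HR2 HR3]]] := @exists_root_bracket d (2 * N) d_ge1 ltac:(lia).
exists R; apply: (Rle_trans _ _ _ _ (sumR_const_ge _ _ _)) => [|i Hi].
  2: exact: kernel_row_outside_ge HF Hi HR1 HR3.
have HdR : 0 < INR d by apply: lt_0_INR.
have -> : Rpower (INR N) (1 - s / INR d) = INR N * Rpower (INR N) (- (s / INR d)).
  by rewrite Rpower_plus Rpower_1 //; apply: (Rlt_le_trans 0 1); [lra | apply: (le_INR 1)].
have Hb := @Rpower_opp_root_bracket N R HR1 HR2.
have HA : 0 <= INR N * (Rpower (INR d) (- (INR d + s)) / 2).
  by apply: Rmult_le_pos; [exact: pos_INR | have := Rpower_gt0 (INR d) (- (INR d + s)); lra].
have := Rmult_le_compat_l _ _ _ HA Hb; rewrite /iso_const; change (length F) with N; lra.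
Qed.

End Isoperimetric.

Section PairLists.
Variables A B : Type.

Definition pairs (F : list A) (G : A -> list B) : list (A * B) :=
  flat_map (fun i => map (fun j => (i, j)) (G i)) F.

Lemma In_pairs F G p : In p (pairs F G) <-> In (fst p) F /\ In (snd p) (G (fst p)).
Proof.
rewrite /pairs in_flat_map; split; first by case=> i [Hi /in_map_iff [j [<- Hj]]].
by case: p => i j /= [Hi Hj]; exists i; split => //; apply/in_map_iff; exists j.
Qed.

Lemma NoDup_pairs F G : NoDup F -> (forall i, NoDup (G i)) -> NoDup (pairs F G).
Proof.
elim: F => [|a F IH] HF HG /=; first by constructor.
case/NoDup_cons_iff: HF => Ha HF; apply: NoDup_app; last 1 first.
- by move=> p /in_map_iff [j [<- _]] /In_pairs [].
- by apply: NoDup_map_NoDup_ForallPairs => // x y _ _ [].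
- exact: IH.
Qed.

Lemma sumR_pairs F G (f : A * B -> R) : list_sumR (map f (pairs F G)) =
  list_sumR (map (fun i => list_sumR (map (fun j => f (i, j)) (G i))) F).
Proof. by elim: F => [|a F IH] //=; rewrite sumR_app IH map_map. Qed.

Definition pswap (p : A * B) : B * A := (snd p, fst p).

Lemma NoDup_pswap (L : list (A * B)) : NoDup L -> NoDup (map pswap L).
Proof. by apply: NoDup_map_NoDup_ForallPairs => [[a b] [c e]] _ _ [-> ->]. Qed.

Definition row (Q : list (A * B)) (i : A) : list B :=
  map snd (filter (fun p => asbool (fst p = i)) Q).

Lemma NoDup_row Q i : NoDup Q -> NoDup (row Q i).
Proof.
move=> HQ; apply: NoDup_map_NoDup_ForallPairs; last exact: NoDup_filter.
move=> [x1 y1] [x2 y2] /filter_In [_ /asbool_true /= ->] /filter_In [_ /asbool_true /= ->].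
by move=> /= ->.
Qed.

Lemma In_row Q i j : In j (row Q i) -> In (i, j) Q.
Proof. by move=> /in_map_iff [[x y] [/= -> /filter_In [H /asbool_true /= <-]]]. Qed.

Lemma sumR_rows (F : list A) (Q : list (A * B)) (g : A * B -> R) : NoDup F ->
  (forall p, In p Q -> In (fst p) F) ->
  list_sumR (map g Q) = list_sumR (map (fun i => list_sumR (map (fun j => g (i, j)) (row Q i))) F).
Proof.
elim: F Q => [|a F IH] Q HF HQ.
  by case: Q HQ => [|p Q] HQ //=; case: (HQ p (or_introl erefl)).
case/NoDup_cons_iff: HF => Ha HF; rewrite /= (sumR_filter g (fun p => asbool (fst p = a)) Q).
rewrite (IH (filter (fun p => ~~ asbool (fst p = a)) Q)) //; last first.
  move=> p /filter_In [Hp /negbTE /asbool_false Hn].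
  by case: (HQ p Hp) => // H; case: Hn.
congr (_ + _).
  by rewrite map_map; apply: sumR_ext => p /filter_In [_ /asbool_true <-]; case: p.
apply: sumR_ext => i Hi; rewrite /row; do 3 f_equal.
elim: Q {HQ} => [|p Q IHQ] //=.
case Hpa: (asbool (fst p = a)) => /=; case Hpi: (asbool (fst p = i)) => //=; rewrite IHQ //.
by move/asbool_true: Hpa => Hpa; move/asbool_true: Hpi => Hpi; case: Ha; rewrite -Hpa Hpi.
Qed.

End PairLists.

(* [H_le] compares suprema of partial sums, which may be infinite, so the common part of
   the two energies cannot simply be cancelled; the argument goes through the supremum [C]
   of the untouched partial sums, finite because the energy of [u] is bounded by [T]. *)
Lemma H_le_touching_le d (J : pt d -> pt d -> R) (G : pt d -> Prop) (u v : config d)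
    (touch : pt d * pt d -> Prop) (T B : R) :
  H_le J G u v ->
  (forall L, NoDup L -> (forall p, In p L -> adm G p) -> partial_H J u L <= T) ->
  (forall p, ~ touch p -> pair_energy J u p = pair_energy J v p) ->
  (forall Q, NoDup Q -> (forall p, In p Q -> adm G p /\ touch p) -> partial_H J v Q <= B) ->
  forall P, NoDup P -> (forall p, In p P -> adm G p /\ touch p) -> partial_H J u P <= B.
Proof.
move=> Hle HT Heq HB P HP HPt.
pose E := fun x =>
  exists L, NoDup L /\ (forall p, In p L -> adm G p /\ ~ touch p) /\ x = partial_H J u L.
have HEb : bound E by exists T => x [L [HL [HLa ->]]]; apply: HT => // p /HLa [].
have HE0 : exists x, E x by exists 0, nil; split; [constructor | split].
have [C [HCub HClub]] := completeness E HEb HE0.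
apply: Rnot_lt_le => Hcon; set eps := (partial_H J u P - B) / 3.
have Heps : 0 < eps by rewrite /eps; lra.
have [x [[Lc [HLc [HLca ->]]] Hx]] : exists x, E x /\ C - eps < x.
  apply: NNPP => H; suff : C <= C - eps by lra.
  by apply: HClub => x Ex; apply: Rnot_lt_le => Hx; apply: H; exists x.
have HLP : NoDup (Lc ++ P).
  by apply: NoDup_app => // p /HLca [_ Hnt] /HPt [].
have HLPa : forall p, In p (Lc ++ P) -> adm G p.
  by move=> p /(in_app_or _ _ _) [/HLca [] | /HPt []].
have [L' [HL'1 [HL'2 HL'3]]] := Hle (Lc ++ P) HLP HLPa eps Heps.
pose tb p := asbool (touch p); set L'u := filter (fun p => ~~ tb p) L'.
have H1 : partial_H J v (filter tb L') <= B.
  apply: HB; first exact: NoDup_filter.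
  by move=> p /filter_In [Hp /asbool_true Ht]; split => //; apply: HL'2.
have H2 : partial_H J v L'u <= C.
  have <- : partial_H J u L'u = partial_H J v L'u.
    by apply: sumR_ext => p /filter_In [_ /negbTE /asbool_false /Heq].
  apply: HCub; exists L'u; split; first exact: NoDup_filter.
  by split => // p /filter_In [Hp /negbTE /asbool_false Ht]; split => //; apply: HL'2.
move: HL'3 Hx H1 H2 Hcon; rewrite /L'u /eps /partial_H sumR_app (sumR_filter _ tb L'); lra.
Qed.

Lemma sv_mul a b : sv a * sv b = if a == b then 1 else -1.
Proof. by case: a; case: b => /=; lra. Qed.

Lemma pair_energy_negb d (J : pt d -> pt d -> R) (u : config d) p :
  pair_energy J (fun x => ~~ u x) p = pair_energy J u p.
Proof. by rewrite /pair_energy; case: (u p.1); case: (u p.2) => /=; ring. Qed.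

Lemma minimizer_negb d (J : pt d -> pt d -> R) G (u : config d) :
  minimizer J G u -> minimizer J G (fun x => ~~ u x).
Proof.
move=> Hm v Hv L HL HLa eps Heps.
have Hv' : forall i, ~ G i -> ~~ v i = u i by move=> i /Hv ->; case: (u i).
have [L' [H1 [H2 H3]]] := Hm _ Hv' L HL HLa eps Heps.
have E (w : config d) L0 : partial_H J (fun x => ~~ w x) L0 = partial_H J w L0.
  by apply: sumR_ext => p _; apply: pair_energy_negb.
by exists L'; split => //; split => //; rewrite E -(E v).
Qed.

Section InteractionBounds.
Variables (d : nat) (s lam Lam : R) (J : pt d -> pt d -> R).
Hypothesis s_gt0 : 0 < s.
Hypothesis Lam_ge0 : 0 <= Lam.
Hypothesis J_ge0 : forall i j, 0 <= J i j.
Hypothesis HJ1 : J1 J.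
Hypothesis HJ2 : J2 J.
Hypothesis HJP : JP J s lam Lam.

Lemma J_kernel_bounds i j : i <> j ->
  lam * kernel d s (l1 (psub i j)) <= J i j <= Lam * kernel d s (l1 (psub i j)).
Proof. by move/l1_neq_ge1 => H; apply: HJP; lia. Qed.

Lemma pair_energy_bounds (u : config d) p : 0 <= pair_energy J u p <= 2 * J (fst p) (snd p).
Proof. by rewrite /pair_energy sv_mul; have := J_ge0 (fst p) (snd p); case: (_ == _); lra. Qed.

Lemma pair_energy_sym (u : config d) a b : pair_energy J u (a, b) = pair_energy J u (b, a).
Proof. by rewrite /pair_energy /= HJ1; ring. Qed.

Lemma sum_J_row_tail_le (i : pt d) (t : nat) (L : list (pt d)) : (1 <= t)%coq_nat -> NoDup L ->
  (forall j, In j L -> Z.of_nat t <= linf (psub j i))%Z ->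
  list_sumR (map (fun j => J i j) L) <= Lam * (tail_const d s * Rpower (INR t) (- s)).
Proof.
move=> Ht HL HLj; have Htail := kernel_tail_sum_le s_gt0 i Ht HL HLj.
apply: (Rle_trans _ _ _ _ (Rmult_le_compat_l _ _ _ Lam_ge0 Htail)); rewrite -sumR_scal.
apply: sumR_le => j Hj; have Hij : i <> j by move=> E; have := HLj j Hj; rewrite -E linf_self; lia.
by rewrite l1_sym; case: (J_kernel_bounds Hij).
Qed.

Lemma sum_J_row_le (i : pt d) (L : list (pt d)) : NoDup L ->
  list_sumR (map (fun j => J i j) L) <= Lam * tail_const d s.
Proof.
move=> HL; rewrite (sumR_filter _ (fun j => asbool (j = i))).
rewrite (sumR_ext _ (fun=> 0)); last by move=> j /filter_In [_ /asbool_true ->]; apply: HJ2.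
have -> : Lam * tail_const d s = Lam * (tail_const d s * Rpower (INR 1) (- s)).
  by rewrite /= Rpower_1_base; ring.
rewrite sumR_const Rmult_0_r Rplus_0_l.
apply: (@sum_J_row_tail_le i 1%nat _ (le_n 1) (NoDup_filter _ HL)).
by move=> j /filter_In [_ /negbTE /asbool_false /linf_neq_ge1]; lia.
Qed.

Lemma sum_J_rows_le (Gl : list (pt d)) (Q : list (pt d * pt d)) : NoDup Gl -> NoDup Q ->
  (forall p, In p Q -> In (fst p) Gl) ->
  list_sumR (map (fun p => J (fst p) (snd p)) Q) <= INR (length Gl) * (Lam * tail_const d s).
Proof.
move=> HGl HQ HQG; rewrite (sumR_rows _ (fun p => J (fst p) (snd p)) HGl HQG).
by apply: sumR_const_le => i _; apply/sum_J_row_le/NoDup_row.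
Qed.

Lemma energy_in_finite_le (G : pt d -> Prop) (Gl : list (pt d)) (u : config d) :
  NoDup Gl -> (forall x, G x <-> In x Gl) ->
  forall L, NoDup L -> (forall p, In p L -> adm G p) ->
  partial_H J u L <= 4 * INR (length Gl) * (Lam * tail_const d s).
Proof.
move=> HGl HG L HL HLa; pose b := fun p : pt d * pt d => asbool (G (fst p)).
have Hhalf Q : NoDup Q -> (forall p, In p Q -> G (fst p)) ->
    partial_H J u Q <= 2 * (INR (length Gl) * (Lam * tail_const d s)).
  move=> HQ HQG; apply: (Rle_trans _ (list_sumR (map (fun p => 2 * J (fst p) (snd p)) Q))).
    by apply: sumR_le => p _; case: (pair_energy_bounds u p).
  by rewrite sumR_scal; apply/Rmult_le_compat_l/sum_J_rows_le => // [|p /HQG /HG //]; lra.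
have H1 := Hhalf _ (NoDup_filter b HL) (fun p => @In_filter_asbool _ _ _ p).
have H2 := Hhalf _ (NoDup_pswap (NoDup_filter (fun p => ~~ b p) HL)).
rewrite /partial_H (sumR_filter _ b); rewrite /partial_H map_map in H1 H2.
suff E : list_sumR (map (pair_energy J u) (filter (fun p => ~~ b p) L)) =
         list_sumR (map (fun p => pair_energy J u (pswap p)) (filter (fun p => ~~ b p) L)).
  rewrite E; suff : list_sumR (map (fun p => pair_energy J u (pswap p)) (filter (fun p => ~~ b p) L))
      <= 2 * (INR (length Gl) * (Lam * tail_const d s)) by lra.
  apply: H2 => p /in_map_iff [[x y] [<- /filter_In [Hq /negbTE /asbool_false Hn]]] /=.
  by case: (HLa _ Hq).
by apply: sumR_ext => [[x y]] _; rewrite pair_energy_sym.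
Qed.

Section Flip.
Variables (G : pt d -> Prop) (Gl : list (pt d)) (u : config d) (F : list (pt d)) (B : R).
Hypothesis HGl : NoDup Gl.
Hypothesis HG : forall x, G x <-> In x Gl.
Hypothesis HF : NoDup F.
Hypothesis HFG : forall i, In i F -> G i /\ u i = true.

Definition crosses (p : pt d * pt d) := In (fst p) F /\ ~ In (snd p) F /\ u (snd p) = true.
Definition touches (p : pt d * pt d) := In (fst p) F \/ In (snd p) F.
Definition flip (x : pt d) := if asbool (In x F) then false else u x.

Hypothesis HB : forall Q, NoDup Q -> (forall p, In p Q -> crosses p) ->
  list_sumR (map (fun p => J (fst p) (snd p)) Q) <= B.

Lemma flip_pair_energy_le p : touches p -> pair_energy J flip p <=
  (if asbool (crosses p) then 2 * J (fst p) (snd p) else 0) +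
  (if asbool (crosses (pswap p)) then 2 * J (fst p) (snd p) else 0).
Proof.
case: p => a b Ht; rewrite /pair_energy /flip /crosses /=; have := J_ge0 a b.
case: (classic (In a F)) => Ha; case: (classic (In b F)) => Hb;
  rewrite ?(asboolT Ha) ?(asboolT Hb) ?(asboolF Ha) ?(asboolF Hb) /=.
- by rewrite (asboolF (P := (_ /\ ~ In b F /\ _))) ?(asboolF (P := (_ /\ ~ In a F /\ _))); try lra;
    case=> _ [].
- rewrite (asboolF (P := (In b F /\ _))); last by case.
  by case Hub: (u b) => /=; [rewrite asboolT // | rewrite asboolF; [|case=> _ []]]; lra.
- rewrite (asboolF (P := (In a F /\ _))); last by case.
  by case Hua: (u a) => /=; [rewrite asboolT // | rewrite asboolF; [|case=> _ []]]; lra.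
- by case: Ht.
Qed.

Lemma flip_touching_energy_le Q : NoDup Q -> (forall p, In p Q -> touches p) ->
  partial_H J flip Q <= 4 * B.
Proof.
move=> HQ HQt.
apply: (Rle_trans _ _ _ (sumR_le _ _ _ (fun p Hp => flip_pair_energy_le (HQt p Hp)))).
rewrite sumR_plus !sumR_if !sumR_scal.
have H1 := HB (NoDup_filter _ HQ) (fun p => @In_filter_asbool _ _ _ p).
have H2 : list_sumR (map (fun p => J (fst p) (snd p))
    (filter (fun p => asbool (crosses (pswap p))) Q)) <= B.
  rewrite (sumR_ext _ (fun p => J (snd p) (fst p))); last by move=> p _; rewrite HJ1.
  have := HB (NoDup_pswap (NoDup_filter (fun p => asbool (crosses (pswap p))) HQ)); rewrite map_map.
  by apply=> p /in_map_iff [q [<- /filter_In [_ /asbool_true]]].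
lra.
Qed.

(* Flipping [F] to -1 trades the interaction of [F] with the -1 spins outside [F]
   for its interaction with the +1 spins outside [F]. *)
Lemma minimizer_flip_le : minimizer J G u ->
  forall P, NoDup P -> (forall p, In p P -> In (fst p) F /\ ~ In (snd p) F /\ u (snd p) = false) ->
  list_sumR (map (fun p => J (fst p) (snd p)) P) <= 2 * B.
Proof.
move=> Hmin P HP HPF.
have Hflip : forall x, ~ G x -> flip x = u x.
  by move=> x Hx; rewrite /flip asboolF // => /HFG [].
have Hle := H_le_touching_le touches (Hmin _ Hflip) (@energy_in_finite_le G Gl u HGl HG) _
  (fun Q HQ HQt => flip_touching_energy_le HQ (fun p Hp => proj2 (HQt p Hp))).
have E : partial_H J u P = 2 * list_sumR (map (fun p => J (fst p) (snd p)) P).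
  rewrite /partial_H -sumR_scal; apply: sumR_ext => [[a b]] /HPF /= [Ha [Hb Hub]].
  by rewrite /pair_energy /= Hub (proj2 (HFG _ Ha)) /=; ring.
suff : partial_H J u P <= 4 * B by lra.
apply: Hle => // [[a b]|[a b] /[dup] /HPF /= [Ha _] Hp] /=.
  rewrite /touches /pair_energy /flip /= => Ht.
  by rewrite !asboolF // => H; apply: Ht; [right | left].
by split; [left; case: (HFG _ Ha) | left].
Qed.

End Flip.

End InteractionBounds.

Section PowerSums.
Variable s : R.
Hypothesis s_in01 : 0 < s < 1.

Definition power_sum (n : nat) := list_sumR (map (fun k => Rpower (INR k.+1) (- s)) (iota 0 n)).

Lemma power_sum_mono n n' : (n <= n')%coq_nat -> power_sum n <= power_sum n'.
Proof.
elim: n' => [|n' IH] Hn; first by have -> : n = 0%nat; [lia | lra].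
case: (Nat.eq_dec n n'.+1) => [->|Hne]; first lra.
rewrite /power_sum sumR_iotaSr; have := Rpower_gt0 (INR (0 + n').+1) (- s); have := IH ltac:(lia).
rewrite /power_sum; lra.
Qed.

Lemma Rpower_increment_ge (x : R) : 1 <= x ->
  (1 - s) * Rpower (x + 1) (- s) <= Rpower (x + 1) (1 - s) - Rpower x (1 - s).
Proof.
move=> Hx; have [c [-> Hc]] := MVT_cor2 (fun y => Rpower y (1 - s))
  (fun y => (1 - s) * Rpower y (1 - s - 1)) x (x + 1) ltac:(lra)
  (fun c Hc => derivable_pt_lim_power c (1 - s) ltac:(lra)).
have -> : 1 - s - 1 = - s by ring.
have : Rpower (x + 1) (- s) <= Rpower c (- s) by apply: Rpower_le_base_neg; lra.
have -> : x + 1 - x = 1 by ring.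
nra.
Qed.

Lemma power_sum_le n : (1 <= n)%coq_nat -> power_sum n <= Rpower (INR n) (1 - s) / (1 - s).
Proof.
elim: n => [|n IH] Hn; first lia.
rewrite /power_sum sumR_iotaSr add0n S_INR; apply: (Rmult_le_reg_r (1 - s)); first lra.
have -> : Rpower (INR n + 1) (1 - s) / (1 - s) * (1 - s) = Rpower (INR n + 1) (1 - s) by field; lra.
case: (Nat.eq_dec n 0) => [->|Hn0].
  by rewrite /= Rplus_0_l Rplus_0_l !Rpower_1_base; lra.
have Hn1 : 1 <= INR n by apply: (le_INR 1); lia.
have := Rmult_le_compat_r (1 - s) _ _ ltac:(lra) (IH ltac:(lia)).
have -> : Rpower (INR n) (1 - s) / (1 - s) * (1 - s) = Rpower (INR n) (1 - s) by field; lra.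
by rewrite /power_sum; have := Rpower_increment_ge Hn1; lra.
Qed.

(* The depths [r + 1 - a] of a point at distance [a] in the balls of radius
   [r = m, ..., m + n - 1] are distinct, and positive only when [a <= r]. *)
Lemma depth_power_sum_le (a : Z) m n :
  list_sumR (map (fun r => if asbool (a <= Z.of_nat r)%Z
                            then Rpower (INR (Z.to_nat (Z.of_nat r.+1 - a))) (- s) else 0) (iota m n))
  <= if asbool (a < Z.of_nat (m + n))%Z then power_sum n else 0.
Proof.
elim: n m => [|n IH] m; first by rewrite /=; case: (asbool _); rewrite /power_sum /=; lra.
case: (Z_le_gt_dec a (Z.of_nat m)) => Ham.
  rewrite asboolT; last lia.
  rewrite sumR_iota_addn; apply: sumR_le => k _; rewrite asboolT; last lia.
  apply: Rpower_le_base_neg; last by lra.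
  by split; [apply: lt_0_INR | apply: le_INR]; lia.
rewrite [iota _ _]/= [map _ (_ :: _)]/= asboolF; last lia.
apply: (Rle_trans _ _ _ (Rplus_le_compat_l _ _ _ (IH m.+1))); rewrite Rplus_0_l addSnnS.
by case: (asbool _); [apply: power_sum_mono; lia | lra].
Qed.

End PowerSums.

Definition kappa (d : nat) (s lam Lam : R) :=
  lam * iso_const d s * (1 - s) / (3 * (Lam * tail_const d s)).

Definition density_const (d : nat) (s lam Lam : R) :=
  Rmin 1 (Rpower (kappa d s lam Lam / 2 ^ d) (INR d / s)).

Lemma density_const_gt0 d s lam Lam : 0 < density_const d s lam Lam.
Proof. by apply: Rmin_glb_lt; [lra | exact: Rpower_gt0]. Qed.

Section DensityConstants.
Variables (d : nat) (s lam Lam : R).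
Hypothesis d_ge1 : (1 <= d)%coq_nat.
Hypothesis s_in01 : 0 < s < 1.
Hypothesis lam_gt0 : 0 < lam.
Hypothesis lam_le_Lam : lam <= Lam.

Lemma kappa_gt0 : 0 < kappa d s lam Lam.
Proof.
have := iso_const_gt0 d s; have := tail_const_gt0 d (proj1 s_in01) => H1 H2.
apply: Rdiv_lt_0_compat; last by nra.
by apply: Rmult_lt_0_compat; [apply: Rmult_lt_0_compat | lra].
Qed.

Lemma density_const_key :
  Rpower (density_const d s lam Lam) (s / INR d) * 2 ^ d <= kappa d s lam Lam.
Proof.
have HdR : 0 < INR d by apply: lt_0_INR.
have Hs : 0 < s by lra.
have H2 : 0 < 2 ^ d by apply: pow_lt; lra.
have Hk : 0 < kappa d s lam Lam / 2 ^ d by apply: Rdiv_lt_0_compat; [exact: kappa_gt0 | lra].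
suff : Rpower (density_const d s lam Lam) (s / INR d) <= kappa d s lam Lam / 2 ^ d.
  move=> H; have := Rmult_le_compat_r _ _ _ (Rlt_le _ _ H2) H.
  by rewrite /Rdiv Rmult_assoc Rinv_l; lra.
apply: (Rle_trans _ (Rpower (Rpower (kappa d s lam Lam / 2 ^ d) (INR d / s)) (s / INR d))).
  apply: Rle_Rpower_l; first by apply/Rlt_le/Rdiv_lt_0_compat.
  by split; [exact: density_const_gt0 d s lam Lam | exact: Rmin_r].
by rewrite Rpower_mult (_ : INR d / s * (s / INR d) = 1) ?Rpower_1 //; [lra | field; lra].
Qed.

End DensityConstants.

(* One step of the density induction: the exponents add up as s + d (1 - s/d) = d. *)
Lemma density_propagates (d : nat) (s k c x y V W : R) : (1 <= d)%coq_nat -> 0 < s < 1 ->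
  0 < c -> 0 < x -> 0 < y <= 2 * x -> Rpower c (s / INR d) * 2 ^ d <= k ->
  c * Rpower x (INR d) <= V -> k * Rpower x s * Rpower V (1 - s / INR d) <= W ->
  c * Rpower y (INR d) <= W.
Proof.
move=> Hd Hs Hc Hx Hy Hk HV HW; set th := 1 - s / INR d.
have HdR : 1 <= INR d by apply: (le_INR 1).
have Hth : 0 <= th.
  rewrite /th; suff : s / INR d <= 1 by lra.
  by apply: (Rmult_le_reg_r (INR d)); [lra | field_simplify; lra].
have Hcx : 0 < c * Rpower x (INR d) by apply: Rmult_lt_0_compat => //; exact: Rpower_gt0.
have HVth : Rpower c th * Rpower x (INR d * th) <= Rpower V th.
  by rewrite -Rpower_mult Rpower_mult_distr //; [apply: Rle_Rpower_l; lra | exact: Rpower_gt0].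
have Hxd : Rpower x s * Rpower x (INR d * th) = Rpower x (INR d).
  by rewrite -Rpower_plus; congr Rpower; rewrite /th; field; lra.
have Hc_split : c = Rpower c (s / INR d) * Rpower c th.
  by rewrite -Rpower_plus /th Rplus_minus Rpower_1.
have Hyd : Rpower y (INR d) <= 2 ^ d * Rpower x (INR d).
  rewrite -(Rpower_pow d 2); last lra.
  by rewrite Rpower_mult_distr; [apply: Rle_Rpower_l; lra | lra | lra].
have HPc := Rpower_gt0 c th; have HPx := Rpower_gt0 x (INR d); have HPs := Rpower_gt0 x s.
have HW' : k * Rpower c th * Rpower x (INR d) <= W.
  rewrite -Hxd; apply: Rle_trans HW; rewrite !Rmult_assoc; apply: Rmult_le_compat_l.
    by have := Rpower_gt0 c (s / INR d); have := pow_lt 2 d; nra.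
  by have := Rmult_le_compat_l _ _ _ (Rlt_le _ _ HPs) HVth; rewrite /th; lra.
apply: Rle_trans HW'; rewrite {1}Hc_split.
have HPcs := Rpower_gt0 c (s / INR d).
have := Rmult_le_compat_l _ _ _ (Rlt_le _ _ (Rmult_lt_0_compat _ _ HPcs HPc)) Hyd.
have := Rmult_le_compat_r _ _ _ (Rlt_le _ _ (Rmult_lt_0_compat _ _ HPc HPx)) Hk.
nra.
Qed.

Section Density.
Variables (d : nat) (s lam Lam : R) (J : pt d -> pt d -> R).
Hypothesis d_ge1 : (1 <= d)%coq_nat.
Hypothesis s_in01 : 0 < s < 1.
Hypothesis lam_gt0 : 0 < lam.
Hypothesis lam_le_Lam : lam <= Lam.
Hypothesis J_ge0 : forall i j, 0 <= J i j.
Hypothesis HJ1 : J1 J.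
Hypothesis HJ2 : J2 J.
Hypothesis HJP : JP J s lam Lam.
Variables (G : pt d -> Prop) (Gl : list (pt d)) (u : config d).
Hypothesis HGl : NoDup Gl.
Hypothesis HG : forall x, G x <-> In x Gl.
Hypothesis Hmin : minimizer J G u.
Variables (p : pt d) (M : nat).
Hypothesis cube_in_G : forall i, cube p M i -> G i.
Hypothesis u_p : u p = true.

Let s_gt0 : 0 < s. Proof. lra. Qed.
Let Lam_ge0 : 0 <= Lam. Proof. lra. Qed.

Definition plus_spins := filter u (cube_enum p M).
Definition plus_ball (r : nat) :=
  filter (fun i => asbool (linf (psub i p) <= Z.of_nat r)%Z) plus_spins.
Definition plus_volume (r : nat) := length (plus_ball r).
Definition depth (r : nat) (i : pt d) := Z.to_nat (Z.of_nat r.+1 - linf (psub i p)).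
Definition theta := 1 - s / INR d.

Lemma theta_gt0 : 0 < theta.
Proof.
rewrite /theta; have Hd : 1 <= INR d by apply: (le_INR 1).
suff : s / INR d <= s by lra.
by apply: (Rmult_le_reg_r (INR d)) => //; field_simplify; nra.
Qed.

Lemma In_plus_ball r : (r <= M)%coq_nat -> forall i,
  In i (plus_ball r) <-> (linf (psub i p) <= Z.of_nat r)%Z /\ u i = true.
Proof.
move=> HrM i; split; first by move=> /filter_In [/filter_In [_ ->] /asbool_true].
move=> [Hl Hu]; apply/filter_In; split; last exact: asboolT.
by apply/filter_In; split => //; apply/In_cube_enum; rewrite /cube; lia.
Qed.

Lemma NoDup_plus_ball r : NoDup (plus_ball r).
Proof. exact/NoDup_filter/NoDup_filter/NoDup_cube_enum. Qed.

Lemma plus_volume_ge1 r : (r <= M)%coq_nat -> (1 <= plus_volume r)%coq_nat.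
Proof.
move=> HrM; have : In p (plus_ball r) by apply/(In_plus_ball HrM); rewrite linf_self; lia.
by rewrite /plus_volume; case: (plus_ball r) => //= *; lia.
Qed.

Lemma plus_volume_mono r r' : (r <= r')%coq_nat -> (r' <= M)%coq_nat ->
  (plus_volume r <= plus_volume r')%coq_nat.
Proof.
move=> Hrr' Hr'M; apply: NoDup_incl_length; first exact: NoDup_plus_ball.
have HrM : (r <= M)%coq_nat by lia.
by move=> i /(In_plus_ball HrM) [Hl Hu]; apply/(In_plus_ball Hr'M); split => //; lia.
Qed.

(* A +1 spin outside the ball of radius [r] is at distance at least [depth r i] from [i]. *)
Lemma plus_ball_crossing_le r : (r <= M)%coq_nat ->
  forall Q, NoDup Q -> (forall q, In q Q -> crosses u (plus_ball r) q) ->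
  list_sumR (map (fun q => J (fst q) (snd q)) Q) <=
  Lam * tail_const d s * list_sumR (map (fun i => Rpower (INR (depth r i)) (- s)) (plus_ball r)).
Proof.
move=> HrM Q HQ HQF.
have HQ1 q : In q Q -> In (fst q) (plus_ball r) by case/HQF.
rewrite (sumR_rows _ (fun q => J (fst q) (snd q)) (NoDup_plus_ball r) HQ1).
rewrite -sumR_scal; apply: sumR_le => i /(In_plus_ball HrM) [Hil _]; rewrite Rmult_assoc.
have Hw : Z.of_nat (depth r i) = (Z.of_nat r.+1 - linf (psub i p))%Z.
  by rewrite /depth Z2Nat.id; lia.
apply: (sum_J_row_tail_le s_gt0 Lam_ge0 HJP i _ (NoDup_row i HQ)); first lia.
move=> j Hj0; have [_ [Hj Hju]] := HQF _ (In_row _ _ _ Hj0).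
have Hjp : (Z.of_nat r < linf (psub j p))%Z.
  case: (Z_lt_le_dec (Z.of_nat r) (linf (psub j p))) => // Hc.
  by case: Hj; apply/(In_plus_ball HrM).
by have := linf_triangle j i p; rewrite Hw; lia.
Qed.

Lemma volume_iso_step r : (r <= M)%coq_nat ->
  lam * iso_const d s * Rpower (INR (plus_volume r)) theta <=
  3 * (Lam * tail_const d s) * list_sumR (map (fun i => Rpower (INR (depth r i)) (- s)) (plus_ball r)).
Proof.
move=> HrM; set F := plus_ball r.
set B := Lam * tail_const d s * list_sumR (map (fun i => Rpower (INR (depth r i)) (- s)) F).
have HF : NoDup F := NoDup_plus_ball r.
have [R HR] := kernel_perimeter_ge d_ge1 s_gt0 (plus_volume_ge1 HrM) HF.
set Out := fun i => filter (outside F) (cube_enum i R).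
set P0 := pairs F Out.
have HP0 : NoDup P0 := NoDup_pairs Out HF (fun i => NoDup_filter _ (NoDup_cube_enum i R)).
have HP0F q : In q P0 -> In (fst q) F /\ ~ In (snd q) F.
  by move=> /In_pairs [Hq1 /filter_In [_ /negbTE /asbool_false Hq2]].
have Hlow : lam * list_sumR (map (fun i => list_sumR (map (fun j => kernel d s (l1 (psub i j))) (Out i))) F)
    <= list_sumR (map (fun q => J (fst q) (snd q)) P0).
  rewrite /P0 sumR_pairs -sumR_scal; apply: sumR_le => i Hi; rewrite -sumR_scal.
  apply: sumR_le => j /filter_In [_ /negbTE /asbool_false Hj] /=.
  have Hij : i <> j by move=> E; apply: Hj; rewrite -E.
  by case: (J_kernel_bounds HJP Hij).
have Hplus : list_sumR (map (fun q => J (fst q) (snd q)) (filter (fun q => u (snd q)) P0)) <= B.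
  apply: (plus_ball_crossing_le HrM (NoDup_filter _ HP0)).
  by move=> q /filter_In [/HP0F [Hq1 Hq2] Hq3].
have Hminus : list_sumR (map (fun q => J (fst q) (snd q)) (filter (fun q => ~~ u (snd q)) P0)) <= 2 * B.
  apply: (minimizer_flip_le s_gt0 Lam_ge0 J_ge0 HJ1 HJ2 HJP HGl HG _ _ Hmin) => //.
  - move=> i /(In_plus_ball HrM) [Hil Hiu]; split => //; apply: cube_in_G; rewrite /cube; lia.
  - exact: plus_ball_crossing_le.
  - exact: NoDup_filter.
  - by move=> q /filter_In [/HP0F [Hq1 Hq2] /negbTE Hq3].
have := sumR_filter (fun q => J (fst q) (snd q)) (fun q => u (snd q)) P0.
have : lam * (iso_const d s * Rpower (INR (length F)) (1 - s / INR d)) <=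
    lam * list_sumR (map (fun i => list_sumR (map (fun j => kernel d s (l1 (psub i j))) (Out i))) F).
  by apply: Rmult_le_compat_l; [lra | exact: HR].
have -> : 3 * (Lam * tail_const d s) * list_sumR (map (fun i => Rpower (INR (depth r i)) (- s)) F)
  = 3 * B by rewrite /B; ring.
rewrite /plus_volume /theta -/F; lra.
Qed.

Lemma depth_sum_le m : (2 * m <= M)%coq_nat ->
  list_sumR (map (fun r => list_sumR (map (fun i => Rpower (INR (depth r i)) (- s)) (plus_ball r)))
    (iota m m.+1)) <= INR (plus_volume (2 * m)) * power_sum s m.+1.
Proof.
move=> H2M; rewrite /plus_ball (sumR_ext _ (fun r => list_sumR (map (fun i =>
  if asbool (linf (psub i p) <= Z.of_nat r)%Z then Rpower (INR (depth r i)) (- s) else 0) plus_spins))).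
  rewrite sumR_swap /plus_volume /plus_ball -sumR_const -sumR_if; apply: sumR_le => i _.
  rewrite /depth; apply: (Rle_trans _ _ _ (depth_power_sum_le s_in01 (linf (psub i p)) m m.+1)).
  case: (Z_lt_le_dec (linf (psub i p)) (Z.of_nat (m + m.+1))) => Hi.
    by rewrite !asboolT; [lra | lia | lia].
  by rewrite !asboolF; [lra | lia | lia].
by move=> r _; rewrite sumR_if.
Qed.

Lemma volume_recursion m : (2 * m <= M)%coq_nat ->
  lam * iso_const d s * INR m.+1 * Rpower (INR (plus_volume m)) theta <=
  3 * (Lam * tail_const d s) * INR (plus_volume (2 * m)) * power_sum s m.+1.
Proof.
move=> H2M; have Hiso := iso_const_gt0 d s; have HC := tail_const_gt0 d s_gt0.
have HR0 : INR m.+1 = INR (length (iota m m.+1)).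
  have len_iota k a : length (iota a k) = k by elim: k a => [|k IH] a //=; rewrite IH.
  by rewrite len_iota.
apply: (Rle_trans _ (list_sumR (map (fun r => lam * iso_const d s * Rpower (INR (plus_volume r)) theta)
    (iota m m.+1)))).
  rewrite HR0 [_ * INR _]Rmult_comm Rmult_assoc; apply: sumR_const_ge => r.
  move=> /In_mem; rewrite mem_iota => /andP [/leP H1 /leP H2].
  apply: Rmult_le_compat_l; first by have := Rmult_lt_0_compat _ _ lam_gt0 Hiso; lra.
  apply: Rle_Rpower_l; first by have := theta_gt0; lra.
  split; first by apply: lt_0_INR; have := @plus_volume_ge1 m; lia.
  by apply/le_INR/plus_volume_mono; lia.
apply: (Rle_trans _ (list_sumR (map (fun r => 3 * (Lam * tail_const d s) *
    list_sumR (map (fun i => Rpower (INR (depth r i)) (- s)) (plus_ball r))) (iota m m.+1)))).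
  apply: sumR_le => r /In_mem; rewrite mem_iota => /andP [_ /leP H2].
  by apply: volume_iso_step; lia.
rewrite sumR_scal [in X in _ <= X]Rmult_assoc; apply: Rmult_le_compat_l; first by nra.
exact: depth_sum_le.
Qed.

Lemma volume_doubling m : (2 * m <= M)%coq_nat ->
  kappa d s lam Lam * Rpower (INR m.+1) s * Rpower (INR (plus_volume m)) theta <=
  INR (plus_volume (2 * m)).
Proof.
move=> H2M; have Hrec := @volume_recursion m H2M.
have HS := power_sum_le s_in01 (ltac:(lia) : (1 <= m.+1)%coq_nat).
have Hm : 0 < INR m.+1 by apply: lt_0_INR; lia.
have HC : 0 < 3 * (Lam * tail_const d s) by have := tail_const_gt0 d s_gt0; nra.
have HV := pos_INR (plus_volume (2 * m)).
have E : INR m.+1 = Rpower (INR m.+1) (1 - s) * Rpower (INR m.+1) s.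
  by rewrite -Rpower_plus (_ : 1 - s + s = 1) ?Rpower_1 //; ring.
have HX := Rpower_gt0 (INR m.+1) (1 - s).
have := Rmult_le_compat_l _ _ _ (Rmult_le_pos _ _ (Rlt_le _ _ HC) HV) HS.
rewrite {1}E /kappa in Hrec *.
set X := Rpower (INR m.+1) (1 - s) in HX *; set C := 3 * (Lam * tail_const d s) in HC *.
move=> H; apply: (Rmult_le_reg_r (C * X / (1 - s))); first by apply: Rdiv_lt_0_compat; nra.
rewrite (_ : INR (plus_volume (2 * m)) * (C * X / (1 - s)) =
  C * INR (plus_volume (2 * m)) * (X / (1 - s))); last by field; lra.
have -> : lam * iso_const d s * (1 - s) / C * Rpower (INR m.+1) s *
    Rpower (INR (plus_volume m)) theta * (C * X / (1 - s)) =
  lam * iso_const d s * (X * Rpower (INR m.+1) s) * Rpower (INR (plus_volume m)) theta.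
  by field; lra.
exact: Rle_trans Hrec H.
Qed.

Lemma plus_volume_ge r : (r <= M)%coq_nat ->
  density_const d s lam Lam * Rpower (INR r.+1) (INR d) <= INR (plus_volume r).
Proof.
elim/lt_wf_ind: r => r IH HrM; have Hc := density_const_gt0 d s lam Lam.
case: (Nat.eq_dec r 0) => [->|Hr0].
  have := le_INR _ _ (plus_volume_ge1 (Nat.le_0_l M)); rewrite (_ : INR 1 = 1) // Rpower_1_base.
  by have := Rmin_l 1 (Rpower (kappa d s lam Lam / 2 ^ d) (INR d / s)); rewrite /density_const; lra.
have [Hhalf1 Hhalf2] : (2 * r./2 <= r)%coq_nat /\ (r <= 2 * r./2 + 1)%coq_nat.
  by have := odd_double_half r; case: (odd r) => /=; rewrite -muln2; lia.
have IH' := IH r./2 ltac:(lia) ltac:(lia).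
have Hkey := density_const_key d_ge1 s_in01 lam_gt0 lam_le_Lam.
apply: (density_propagates d_ge1 s_in01 Hc _ _ Hkey IH').
- by apply: lt_0_INR; lia.
- split; first by apply: lt_0_INR; lia.
  by rewrite !S_INR; have := le_INR _ _ Hhalf2; rewrite plus_INR mult_INR /=; lra.
- apply: (Rle_trans _ _ _ (@volume_doubling r./2 ltac:(lia))).
  by apply/le_INR/plus_volume_mono; lia.
Qed.

Lemma plus_count_ge :
  density_const d s lam Lam * Rpower (INR M.+1) (INR d) <= INR (length (filter u Gl)).
Proof.
apply: (Rle_trans _ _ _ (plus_volume_ge (le_n M))); apply/le_INR/NoDup_incl_length.
  exact: NoDup_plus_ball.
move=> i /(In_plus_ball (le_n M)) [Hi Hu]; apply/filter_In; split => //.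
by apply/HG/cube_in_G; rewrite /cube.
Qed.

End Density.

Lemma Isum_ge_opposite d (J : pt d -> pt d -> R) (u : config d) (A : list (pt d)) (e : R) :
  (forall p, 0 <= pair_energy J u p) ->
  (forall i k, In i A -> In k A -> u i = true -> u k = false -> e <= pair_energy J u (i, k)) ->
  INR (length (filter u A)) * (INR (length (filter (fun k => ~~ u k) A)) * e) <= Isum J u A A.
Proof.
move=> He0 He; have Hrow i : 0 <= list_sumR (map (fun k => pair_energy J u (i, k)) A).
  by apply: sumR_ge0 => k _.
apply: (Rle_trans _ _ _ _ (sumR_filter_le _ u _ (fun i _ => Hrow i))).
apply: sumR_const_ge => i /filter_In [Hi Hui].
apply: (Rle_trans _ _ _ _ (sumR_filter_le _ (fun k => ~~ u k) _ (fun k _ => He0 (i, k)))).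
by apply: sumR_const_ge => k /filter_In [Hk /negbTE Huk]; apply: He.
Qed.

Lemma pair_energy_opposite_ge d s lam Lam (J : pt d -> pt d -> R) (u : config d) q l :
  (1 <= d)%coq_nat -> JP J s lam Lam -> 0 < lam -> 0 < s -> (1 <= l)%coq_nat ->
  forall i k, In i (cube_enum q l) -> In k (cube_enum q l) -> u i = true -> u k = false ->
  2 * lam * (Rpower (2 * INR d) (- (INR d + s)) * Rpower (INR l) (- (INR d + s))) <=
  pair_energy J u (i, k).
Proof.
move=> Hd HJP Hlam Hs Hl i k /In_cube_enum Hi /In_cube_enum Hk Hui Huk.
rewrite Rpower_mult_distr; [| by have := lt_0_INR d ltac:(lia); lra | by apply: lt_0_INR; lia].
have Hik : i <> k by move=> E; rewrite E Huk in Hui.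
have [HJ _] := J_kernel_bounds HJP Hik.
rewrite /pair_energy /= Hui Huk /=.
suff : Rpower (2 * INR d * INR l) (- (INR d + s)) <= kernel d s (l1 (psub i k)).
  by move=> H; have := Rmult_le_compat_l _ _ _ (Rlt_le _ _ Hlam) H; lra.
apply: Rpower_le_base_neg; last by have := pos_INR d; lra.
have Hqk : (linf (psub q k) <= Z.of_nat l)%Z by rewrite linf_sym.
have := l1_neq_ge1 Hik; have := l1_le_linf (psub i k); have := linf_triangle i q k.
move: Hi; rewrite /cube => H1 H3 H4 H5; split.
  by apply: (IZR_lt 0); lia.
by rewrite !INR_IZR_INZ -!mult_IZR; apply: IZR_le; nia.
Qed.

Lemma phase_counts_ge d s lam Lam (J : pt d -> pt d -> R) (u : config d) (q : pt d) (l : nat) :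
  (1 <= d)%coq_nat -> 0 < s < 1 -> 0 < lam -> lam <= Lam -> (forall i j, 0 <= J i j) ->
  J1 J -> J2 J -> JP J s lam Lam -> (1 <= l)%coq_nat ->
  minimizer J (cube q l) u -> in_boundary u q ->
  density_const d s lam Lam * Rpower (INR l) (INR d) <= INR (length (filter u (cube_enum q l))) /\
  density_const d s lam Lam * Rpower (INR l) (INR d) <=
    INR (length (filter (fun k => ~~ u k) (cube_enum q l))).
Proof.
move=> Hd Hs Hlam HlL HJ0 HJ1 HJ2 HJP Hl Hmin [Huq [j [Hqj Huj]]].
have HG x : cube q l x <-> In x (cube_enum q l) by rewrite In_cube_enum.
have Hc := density_const_gt0 d s lam Lam.
split.
  have := plus_count_ge Hd Hs Hlam HlL HJ0 HJ1 HJ2 HJP (NoDup_cube_enum q l) HG Hmin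
    (p := q) (M := l) (fun i Hi => Hi) Huq.
  apply: Rle_trans; apply: Rmult_le_compat_l; first lra.
  by apply: Rle_Rpower_l; [exact: pos_INR | split; [apply: lt_0_INR; lia | rewrite S_INR; lra]].
have Hjq : (linf (psub j q) <= 1)%Z by rewrite -Hqj l1_sym; exact: linf_le_l1.
have Hcube i : cube j (l - 1) i -> cube q l i.
  by rewrite /cube => Hi; have := linf_triangle i j q; lia.
have := plus_count_ge Hd Hs Hlam HlL HJ0 HJ1 HJ2 HJP (NoDup_cube_enum q l) HG
  (minimizer_negb Hmin) Hcube (introT negPf Huj).
by rewrite (_ : (l - 1).+1 = l) //; lia.
Qed.

Theorem mainTheorem13 :
  forall (d : nat), (2 <= d)%coq_nat ->
  forall s lam Lam : R, (0 < s < 1)%R -> (0 < lam)%R -> (lam <= Lam)%R ->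
  exists cstar : R, (0 < cstar)%R /\
    forall J : pt d -> pt d -> R,
      (forall i j, (0 <= J i j)%R) ->
      J1 J -> J2 J -> J5 J -> JP J s lam Lam ->
      forall (u : config d) (q : pt d) (l : nat), (1 <= l)%coq_nat ->
        minimizer J (cube q l) u ->
        in_boundary u q ->
        (Isum J u (cube_enum q l) (cube_enum q l)
           >= cstar * Rpower (INR l) (INR d - s))%R.
Proof.
move=> d Hd s lam Lam Hs Hlam HlL; have Hd1 : (1 <= d)%coq_nat by lia.
set c := density_const d s lam Lam; have Hc : 0 < c := density_const_gt0 d s lam Lam.
set m := Rpower (2 * INR d) (- (INR d + s)); have Hm : 0 < m by apply: Rpower_gt0.
exists (2 * lam * c ^ 2 * m); split.
  by apply: Rmult_lt_0_compat => //; apply: Rmult_lt_0_compat; [lra | exact: pow_lt].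
move=> J HJ0 HJ1 HJ2 _ HJP u q l Hl Hmin Hbd.
have [Hplus Hminus] := phase_counts_ge Hd1 Hs Hlam HlL HJ0 HJ1 HJ2 HJP Hl Hmin Hbd.
have := Isum_ge_opposite (cube_enum q l) (fun p => proj1 (pair_energy_bounds _ HJ0 u p))
  (pair_energy_opposite_ge u q Hd1 HJP Hlam (proj1 Hs) Hl).
have HP := Rpower_gt0 (INR l) (INR d).
have E : 2 * lam * c ^ 2 * m * Rpower (INR l) (INR d - s) = (c * Rpower (INR l) (INR d)) *
    ((c * Rpower (INR l) (INR d)) * (2 * lam * (m * Rpower (INR l) (- (INR d + s))))).
  rewrite (_ : INR d - s = INR d + INR d + - (INR d + s)); last ring.
  by rewrite !Rpower_plus; ring.
have HcP : 0 <= c * Rpower (INR l) (INR d) by apply: Rmult_le_pos; lra.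
have He : 0 <= 2 * lam * (m * Rpower (INR l) (- (INR d + s))).
  by apply: Rmult_le_pos; [lra | apply: Rmult_le_pos; [lra | exact: Rlt_le (Rpower_gt0 _ _)]].
move=> HI; apply: Rle_ge; rewrite E; apply: Rle_trans HI.
apply: Rmult_le_compat => //; first exact: Rmult_le_pos.
exact: Rmult_le_compat_r.
Qed.
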